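(* For all $\mathbf z,\mathbf w\in\mathbb C^m\setminus\{0\}$, setting $\boldsymbol\alpha=\rho_{(n,m)}(\mathbf z)$ and $\boldsymbol\beta=\rho_{(n,m)}(\mathbf w)$, $$\mathbf Q_m^{(\hbar)}(\mathbf z,\mathbf w)=\Gamma\Big(\tfrac{n-1}{2}\Big)\Big(\frac{\boldsymbol\alpha\cdot\boldsymbol\beta}{2\hbar^2}\Big)^{\frac{3-n}{4}}\mathbf I_{\frac{n-3}{2}}\Big(\frac{\sqrt{2\,\boldsymbol\alpha\cdot\boldsymbol\beta}}{\hbar}\Big),$$ where $\mathbf I_\nu$ is the modified Bessel function of the first kind of order $\nu$, and the square root is the branch $\sqrt z=|z|^{1/2}e^{i\theta/2}$ with $\theta=\operatorname{Arg}z\in(-\pi,\pi)$ (the right-hand side being understood via the power series of $\mathbf I_\nu$, so that it is an entire function of $\boldsymbol\alpha\cdot\boldsymbol\beta$). Consequently $\langle \Phi^{(\hbar)}_{\boldsymbol\beta},\Phi^{(\hbar)}_{\boldsymbol\alpha}\rangle_{S^n}$ equals the same expression.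
   Context: Throughout, $(n,m)$ is one of $(2,2),(3,4),(5,8)$ and $\hbar>0$ is a parameter. For $\mathbf z,\mathbf w\in\mathbb C^k$ write $\mathbf z\cdot\mathbf w=\sum_{s=1}^k z_s\overline{w_s}$. The map $\rho_{(n,m)}=(\rho_1,\dots,\rho_{n+1}):\mathbb C^m\to\mathbb C^{n+1}$ is defined by: for $(2,2)$: $\rho_1=\tfrac12(z_2^2-z_1^2)$, $\rho_2=\tfrac{i}{2}(z_1^2+z_2^2)$, $\rho_3=z_1z_2$; for $(3,4)$: $\rho_1=z_1z_3+z_2z_4$, $\rho_2=i(z_1z_3-z_2z_4)$, $\rho_3=i(z_1z_4+z_2z_3)$, $\rho_4=z_1z_4-z_2z_3$; for $(5,8)$: $\rho_1=i(-z_1z_6+z_3z_8+z_2z_5-z_4z_7)$, $\rho_2=z_1z_6+z_3z_8+z_2z_5+z_4z_7$, $\rho_3=z_2z_6+z_3z_7-z_1z_5-z_4z_8$, $\rho_4=i(-z_1z_5+z_4z_8-z_2z_6+z_3z_7)$, $\rho_5=i(-z_1z_8-z_2z_7-z_3z_6-z_4z_5)$, $\rho_6=z_1z_8+z_2z_7-z_3z_6-z_4z_5$. $S^n\subset\mathbb R^{n+1}$ is the unit sphere with normalized surface measure $d\Omega$ and $\langle\phi,\psi\rangle_{S^n}=\int_{S^n}\phi\overline\psi\,d\Omega$. For $\boldsymbol\alpha\in\mathbb C^{n+1}$ the coherent state is $\Phi^{(\hbar)}_{\boldsymbol\alpha}(\mathbf x)=\sum_{\ell\ge0}\frac{\sqrt{2\ell+n-1}}{\ell!\sqrt{n-1}}\big(\frac{\mathbf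 x\cdot\boldsymbol\alpha}{\hbar}\big)^\ell$, $\mathbf x\in S^n$. The kernels $\mathbf Q^{(\hbar)}_m$ are defined by $\mathbf Q^{(\hbar)}_m(\mathbf z,\mathbf w)=\langle \Phi^{(\hbar)}_{\rho_{(n,m)}(\mathbf w)},\Phi^{(\hbar)}_{\rho_{(n,m)}(\mathbf z)}\rangle_{S^n}$; explicitly $\mathbf Q_2^{(\hbar)}(\mathbf z,\mathbf w)=\sum_{k\ge0}\frac{(z_1\overline{w_1}+z_2\overline{w_2})^{2k}}{(2k)!\hbar^{2k}}$, $\mathbf Q_4^{(\hbar)}(\mathbf z,\mathbf w)=\sum_{k\ge0}\frac{(z_1\overline{w_1}+z_2\overline{w_2})^{k}(z_3\overline{w_3}+z_4\overline{w_4})^{k}}{(k!)^2\hbar^{2k}}$, $\mathbf Q_8^{(\hbar)}(\mathbf z,\mathbf w)=\sum_{k\ge0}\frac{\varrho(\mathbf z,\mathbf w)^k}{k!(k+1)!\hbar^{2k}}$, with $\varrho(\mathbf u,\mathbf v)=[u_1\overline{v_1}+u_2\overline{v_2}+u_3\overline{v_3}+u_4\overline{v_4}][u_5\overline{v_5}+u_6\overline{v_6}+u_7\overline{v_7}+u_8\overline{v_8}]+[u_7\overline{v_1}-u_8\overline{v_2}+u_5\overline{v_3}-u_6\overline{v_4}][u_2\overline{v_8}-u_3\overline{v_5}+u_4\overline{v_6}-u_1\overline{v_7}]$. *)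

From Stdlib Require Import Reals Lra Arith Factorial ClassicalEpsilon.
Open Scope R_scope.

Definition C := (R * R)%type.
Definition C0 : C := (0, 0).
Definition C1 : C := (1, 0).
Definition Ci : C := (0, 1).
Definition RtoC (r : R) : C := (r, 0).
Definition Cadd (u v : C) : C := (fst u + fst v, snd u + snd v).
Definition Copp (u : C) : C := (- fst u, - snd u).
Definition Csub (u v : C) : C := Cadd u (Copp v).
Definition Cmul (u v : C) : C :=
  (fst u * fst v - snd u * snd v, fst u * snd v + snd u * fst v).
Definition Cconj (u : C) : C := (fst u, - snd u).
Definition Cscale (r : R) (u : C) : C := (r * fst u, r * snd u).
Fixpoint Cpow (u : C) (k : nat) : C :=
  match k with O => C1 | S k' => Cmul u (Cpow u k') end.

Fixpoint Csum1 (f : nat -> C) (k : nat) : C :=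
  match k with O => C0 | S k' => Cadd (Csum1 f k') (f k) end.

Definition Cseries (f : nat -> C) (l : C) : Prop :=
  infinite_sum (fun k => fst (f k)) (fst l) /\
  infinite_sum (fun k => snd (f k)) (snd l).

(* Vectors of C^k are functions nat -> C, indexed 1..k (other indices ignored). *)
Definition Cvec := nat -> C.

Definition cdot (k : nat) (z w : Cvec) : C :=
  Csum1 (fun s => Cmul (z s) (Cconj (w s))) k.

Definition Cvec_nonzero (k : nat) (z : Cvec) : Prop :=
  exists s, (1 <= s <= k)%nat /\ z s <> C0.

(* ---------- Gamma function (Gauss' limit formula, valid for s > 0) ---------- *)
Definition gauss_gamma_seq (s : R) (N : nat) : R :=
  INR (fact N) * Rpower (INR N) s / prod_f_R0 (fun j => s + INR j) N.
Definition Gamma (s : R) : R :=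
  epsilon (inhabits 0) (fun g => Un_cv (gauss_gamma_seq s) g).

(* I_nu(t) = sum_k (t/2)^{2k+nu} / (k! Gamma(k+nu+1)).  The expression
   (y)^{-nu/2} I_nu(2 sqrt y), understood via this power series, is the entire
   function  sum_k y^k / (k! Gamma(k+nu+1)). *)
Definition besselI_reg_term (nu : R) (y : C) (k : nat) : C :=
  Cscale (/ (INR (fact k) * Gamma (INR k + nu + 1))) (Cpow y k).

Inductive nm_case := NM22 | NM34 | NM58.
Definition n_of (c : nm_case) : nat := match c with NM22 => 2 | NM34 => 3 | NM58 => 5 end.
Definition m_of (c : nm_case) : nat := match c with NM22 => 2 | NM34 => 4 | NM58 => 8 end.

Definition half : C := (/2, 0).

(* rho_(n,m) : C^m -> C^(n+1), components indexed 1..n+1 *)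
Definition rho (c : nm_case) (z : Cvec) : Cvec := fun j =>
  let z1 := z 1%nat in let z2 := z 2%nat in let z3 := z 3%nat in let z4 := z 4%nat in
  let z5 := z 5%nat in let z6 := z 6%nat in let z7 := z 7%nat in let z8 := z 8%nat in
  match c with
  | NM22 =>
    match j with
    | 1%nat => Cmul half (Csub (Cmul z2 z2) (Cmul z1 z1))
    | 2%nat => Cmul (Cmul Ci half) (Cadd (Cmul z1 z1) (Cmul z2 z2))
    | 3%nat => Cmul z1 z2
    | _ => C0 end
  | NM34 =>
    match j with
    | 1%nat => Cadd (Cmul z1 z3) (Cmul z2 z4)
    | 2%nat => Cmul Ci (Csub (Cmul z1 z3) (Cmul z2 z4))
    | 3%nat => Cmul Ci (Cadd (Cmul z1 z4) (Cmul z2 z3))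
    | 4%nat => Csub (Cmul z1 z4) (Cmul z2 z3)
    | _ => C0 end
  | NM58 =>
    match j with
    | 1%nat => Cmul Ci (Csub (Cadd (Cadd (Copp (Cmul z1 z6)) (Cmul z3 z8)) (Cmul z2 z5)) (Cmul z4 z7))
    | 2%nat => Cadd (Cadd (Cadd (Cmul z1 z6) (Cmul z3 z8)) (Cmul z2 z5)) (Cmul z4 z7)
    | 3%nat => Csub (Csub (Cadd (Cmul z2 z6) (Cmul z3 z7)) (Cmul z1 z5)) (Cmul z4 z8)
    | 4%nat => Cmul Ci (Cadd (Csub (Cadd (Copp (Cmul z1 z5)) (Cmul z4 z8)) (Cmul z2 z6)) (Cmul z3 z7))
    | 5%nat => Cmul Ci (Csub (Csub (Csub (Copp (Cmul z1 z8)) (Cmul z2 z7)) (Cmul z3 z6)) (Cmul z4 z5))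
    | 6%nat => Csub (Csub (Cadd (Cmul z1 z8) (Cmul z2 z7)) (Cmul z3 z6)) (Cmul z4 z5)
    | _ => C0 end
  end.

Definition pc (u v : Cvec) (i j : nat) : C := Cmul (u i) (Cconj (v j)).

Definition varrho (u v : Cvec) : C :=
  Cadd
    (Cmul (Cadd (Cadd (Cadd (pc u v 1 1) (pc u v 2 2)) (pc u v 3 3)) (pc u v 4 4))
          (Cadd (Cadd (Cadd (pc u v 5 5) (pc u v 6 6)) (pc u v 7 7)) (pc u v 8 8)))
    (Cmul (Csub (Cadd (Csub (pc u v 7 1) (pc u v 8 2)) (pc u v 5 3)) (pc u v 6 4))
          (Csub (Cadd (Csub (pc u v 2 8) (pc u v 3 5)) (pc u v 4 6)) (pc u v 1 7))).

Definition Q_term (c : nm_case) (hbar : R) (z w : Cvec) (k : nat) : C :=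
  match c with
  | NM22 =>
      Cscale (/ (INR (fact (2 * k)) * hbar ^ (2 * k)))
             (Cpow (Cadd (pc z w 1 1) (pc z w 2 2)) (2 * k))
  | NM34 =>
      Cscale (/ ((INR (fact k)) ^ 2 * hbar ^ (2 * k)))
             (Cmul (Cpow (Cadd (pc z w 1 1) (pc z w 2 2)) k)
                   (Cpow (Cadd (pc z w 3 3) (pc z w 4 4)) k))
  | NM58 =>
      Cscale (/ (INR (fact k) * INR (fact (k + 1)) * hbar ^ (2 * k)))
             (Cpow (varrho z w) k)
  end.

Definition Q_value (c : nm_case) (hbar : R) (z w : Cvec) (q : C) : Prop :=
  Cseries (Q_term c hbar z w) q.

(* Both sides are power series in [x = alpha . beta].  On the image of [rho],
   [x] is [p^2 / 2], [2 p q] or [2 varrho], where [p = z1 w1^* + z2 w2^*] and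
   [q = z3 w3^* + z4 w4^*], so the two series agree term by term as soon as
   [Gamma (k + nu + 1)] is known for [nu = 0], [1] (factorials) and [nu = -1/2]
   ([k! Gamma (k + 1/2) 4^k = (2k)! Gamma (1/2)]).  All three values follow from
   [Gamma (s + 1) = s Gamma s], read off Gauss' product, once the limit defining
   [Gamma] exists at [s = 1] and [s = 1/2]; at [1/2] the sequence is increasing
   and bounded.  The series for [Q_m] converges, being dominated by an
   exponential series. *)

From Pilot Require Import Defs.
From Stdlib Require Import Reals Lra Lia Psatz Factorial ClassicalEpsilon ZArith.
Open Scope R_scope.

Lemma Cscale_Cscale a b u : Cscale a (Cscale b u) = Cscale (a * b) u.
Proof. destruct u; unfold Cscale; simpl; f_equal; ring. Qed.

Lemma Cscale_1 u : Cscale 1 u = u.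
Proof. destruct u; unfold Cscale; simpl; f_equal; ring. Qed.

Lemma Cpow_Cscale r u k : Cpow (Cscale r u) k = Cscale (r ^ k) (Cpow u k).
Proof.
  induction k as [|k IH]; simpl Cpow.
  - unfold Cscale, Defs.C1; simpl; f_equal; ring.
  - rewrite IH. destruct (Cpow u k), u. unfold Cscale, Cmul; simpl; f_equal; ring.
Qed.

Lemma Cpow_Cmul a b k : Cpow (Cmul a b) k = Cmul (Cpow a k) (Cpow b k).
Proof.
  induction k as [|k IH]; simpl Cpow.
  - unfold Cmul, Defs.C1; simpl; f_equal; ring.
  - rewrite IH. destruct (Cpow a k), (Cpow b k), a, b. unfold Cmul; simpl; f_equal; ring.
Qed.

Lemma Cpow_double p k : Cpow p (2 * k) = Cpow (Cmul p p) k.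
Proof.
  induction k as [|k IH]; [reflexivity|].
  replace (2 * S k)%nat with (S (S (2 * k))) by lia.
  change (Cpow p (S (S (2 * k)))) with (Cmul p (Cmul p (Cpow p (2 * k)))).
  rewrite IH. simpl Cpow.
  destruct (Cpow (Cmul p p) k), p. unfold Cmul; simpl; f_equal; ring.
Qed.

Definition Cnorm1 (u : Defs.C) : R := Rabs (fst u) + Rabs (snd u).

Lemma Cnorm1_ge0 u : 0 <= Cnorm1 u.
Proof. unfold Cnorm1. pose proof (Rabs_pos (fst u)); pose proof (Rabs_pos (snd u)); lra. Qed.

Lemma Rabs_fst_le_Cnorm1 u : Rabs (fst u) <= Cnorm1 u.
Proof. unfold Cnorm1. pose proof (Rabs_pos (snd u)); lra. Qed.

Lemma Rabs_snd_le_Cnorm1 u : Rabs (snd u) <= Cnorm1 u.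
Proof. unfold Cnorm1. pose proof (Rabs_pos (fst u)); lra. Qed.

Lemma Cnorm1_Cmul u v : Cnorm1 (Cmul u v) <= Cnorm1 u * Cnorm1 v.
Proof.
  destruct u as [a b], v as [c d]. unfold Cnorm1, Cmul, Rminus; simpl.
  pose proof (Rabs_triang (a * c) (- (b * d))). pose proof (Rabs_triang (a * d) (b * c)).
  rewrite Rabs_Ropp, !Rabs_mult in *.
  pose proof (Rabs_pos a); pose proof (Rabs_pos b); pose proof (Rabs_pos c); pose proof (Rabs_pos d).
  nra.
Qed.

Lemma Cnorm1_Cpow u k : Cnorm1 (Cpow u k) <= Cnorm1 u ^ k.
Proof.
  induction k as [|k IH]; simpl.
  - unfold Cnorm1, Defs.C1; simpl. rewrite Rabs_R1, Rabs_R0. lra.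
  - eapply Rle_trans; [apply Cnorm1_Cmul|].
    apply Rmult_le_compat_l; [apply Cnorm1_ge0 | exact IH].
Qed.

Lemma Cnorm1_Cscale r u : Cnorm1 (Cscale r u) = Rabs r * Cnorm1 u.
Proof. destruct u; unfold Cnorm1, Cscale; simpl. rewrite !Rabs_mult. ring. Qed.

Lemma Un_cv_const r : Un_cv (fun _ => r) r.
Proof. intros e He. exists 0%nat. intros. unfold R_dist. rewrite Rminus_diag, Rabs_R0. exact He. Qed.

Lemma Un_cv_eventually_eq u v l N :
  (forall n, (N <= n)%nat -> u n = v n) -> Un_cv u l -> Un_cv v l.
Proof.
  intros E H e He. destruct (H e He) as [M HM]. exists (max N M). intros n Hn.
  rewrite <- E by lia. apply HM. lia.
Qed.

Lemma Un_cv_S u l : Un_cv (fun n => u (S n)) l -> Un_cv u l.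
Proof.
  intros H e He. destruct (H e He) as [N HN]. exists (S N). intros [|n] Hn; [lia|].
  apply HN. lia.
Qed.

Lemma infinite_sum_scal_eq (a b : nat -> R) r l :
  (forall k, b k = r * a k) -> infinite_sum a l -> infinite_sum b (r * l).
Proof.
  intros E H e He. destruct (CV_mult _ _ _ _ (Un_cv_const r) H e He) as [N HN]. exists N. intros n Hn.
  replace (sum_f_R0 b n) with (r * sum_f_R0 a n); [exact (HN n Hn)|].
  rewrite scal_sum. apply sum_eq. intros; rewrite E; ring.
Qed.

Lemma infinite_sum_abs_le (g b : nat -> R) lb :
  (forall k, Rabs (g k) <= b k) -> infinite_sum b lb -> exists l, infinite_sum g l.
Proof.
  intros Hgb Hb.
  destruct (Rseries_CV_comp (fun k => Rabs (g k)) b) as [la Hla].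
  - intro k. split; [apply Rabs_pos | apply Hgb].
  - exists lb. exact Hb.
  - destruct (cv_cauchy_2 g (cauchy_abs g (cv_cauchy_1 _ (exist _ la Hla)))) as [l Hl].
    exists l. exact Hl.
Qed.

Lemma Cseries_scale_eq (f g : nat -> Defs.C) r l :
  (forall k, g k = Cscale r (f k)) -> Cseries f l -> Cseries g (Cscale r l).
Proof.
  intros E [H1 H2]. split; eapply infinite_sum_scal_eq; try eassumption;
    intro k; rewrite E; reflexivity.
Qed.

Lemma Cseries_exp_bound (f : nat -> Defs.C) M :
  (forall k, Cnorm1 (f k) <= M ^ k / INR (fact k)) -> exists l, Cseries f l.
Proof.
  intro Hf. destruct (exist_exp M) as [lM HM].
  assert (Hexp : infinite_sum (fun k => M ^ k / INR (fact k)) lM).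
  { replace lM with (1 * lM) by ring. eapply infinite_sum_scal_eq; [|exact HM].
    intro k; unfold Rdiv; ring. }
  destruct (infinite_sum_abs_le (fun k => fst (f k)) _ _
    (fun k => Rle_trans _ _ _ (Rabs_fst_le_Cnorm1 (f k)) (Hf k)) Hexp) as [l1 H1].
  destruct (infinite_sum_abs_le (fun k => snd (f k)) _ _
    (fun k => Rle_trans _ _ _ (Rabs_snd_le_Cnorm1 (f k)) (Hf k)) Hexp) as [l2 H2].
  exists (l1, l2). split; assumption.
Qed.

Lemma prod_f_R0_pos f N : (forall j, 0 < f j) -> 0 < prod_f_R0 f N.
Proof.
  intro Hf. induction N as [|N IH]; simpl; [apply Hf|]. apply Rmult_lt_0_compat; auto.
Qed.

Lemma prod_f_R0_shift_mul s N :
  prod_f_R0 (fun j => s + 1 + INR j) N * s = prod_f_R0 (fun j => s + INR j) N * (s + INR N + 1).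
Proof.
  induction N as [|N IH]; cbn [prod_f_R0]; [simpl; ring|].
  rewrite S_INR. transitivity (prod_f_R0 (fun j => s + 1 + INR j) N * s * (s + 1 + (INR N + 1)));
    [ring | rewrite IH; ring].
Qed.

Lemma prod_f_R0_succ_INR N : prod_f_R0 (fun j => 1 + INR j) N = INR (fact (S N)).
Proof.
  induction N as [|N IH]; cbn [prod_f_R0]; [simpl; ring|].
  rewrite IH. change (fact (S (S N))) with (S (S N) * fact (S N))%nat.
  rewrite mult_INR, !S_INR. ring.
Qed.

Lemma Un_cv_INR_ratio a : 0 < a -> Un_cv (fun N => INR N / (INR N + a)) 1.
Proof.
  intros Ha e He.
  destruct (archimed (a / e)) as [Hup _].
  assert (Hz : (0 <= up (a / e))%Z) by (apply le_IZR; pose proof (Rdiv_lt_0_compat a e Ha He); lra).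
  exists (Z.to_nat (up (a / e))). intros n Hn.
  assert (Hn' : a / e < INR n).
  { apply le_INR in Hn. rewrite INR_IZR_INZ, Z2Nat.id in Hn by exact Hz. lra. }
  assert (Han : a < e * INR n).
  { apply (Rmult_lt_compat_l e) in Hn'; [|exact He].
    replace (e * (a / e)) with a in Hn' by (field; lra). exact Hn'. }
  pose proof (pos_INR n).
  unfold R_dist. replace (INR n / (INR n + a) - 1) with (- (a / (INR n + a))) by (field; lra).
  rewrite Rabs_Ropp, Rabs_right by (apply Rle_ge, Rlt_le, Rdiv_lt_0_compat; lra).
  apply (Rmult_lt_reg_r (INR n + a)); [lra|].
  unfold Rdiv. rewrite Rmult_assoc, Rinv_l by lra. nra.
Qed.

Definition Gamma_conv (s : R) : Prop := exists g, Un_cv (gauss_gamma_seq s) g.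

Lemma Gamma_spec s : Gamma_conv s -> Un_cv (gauss_gamma_seq s) (Gamma s).
Proof. exact (epsilon_spec (inhabits 0) (fun g => Un_cv (gauss_gamma_seq s) g)). Qed.

Lemma Gamma_unique s g : Un_cv (gauss_gamma_seq s) g -> Gamma s = g.
Proof. intro H. exact (UL_sequence _ _ _ (Gamma_spec s (ex_intro _ g H)) H). Qed.

Lemma gauss_gamma_seq_succ s N : 0 < s -> (1 <= N)%nat ->
  gauss_gamma_seq (s + 1) N = gauss_gamma_seq s N * (s * (INR N / (INR N + (s + 1)))).
Proof.
  intros Hs HN. unfold gauss_gamma_seq.
  assert (HNp : 0 < INR N) by (apply lt_0_INR; lia).
  assert (HB : 0 < prod_f_R0 (fun j => s + INR j) N)
    by (apply prod_f_R0_pos; intro j; pose proof (pos_INR j); lra).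
  rewrite Rpower_plus, Rpower_1 by exact HNp.
  replace (prod_f_R0 (fun j => s + 1 + INR j) N)
    with (prod_f_R0 (fun j => s + INR j) N * (s + INR N + 1) / s)
    by (rewrite <- prod_f_R0_shift_mul; field; lra).
  field. repeat split; lra.
Qed.

Lemma gauss_gamma_seq_succ_cv s : 0 < s -> Gamma_conv s ->
  Un_cv (gauss_gamma_seq (s + 1)) (s * Gamma s).
Proof.
  intros Hs Hc. replace (s * Gamma s) with (Gamma s * (s * 1)) by ring.
  apply (Un_cv_eventually_eq _ _ _ 1 (fun N HN => eq_sym (gauss_gamma_seq_succ s N Hs HN))).
  apply CV_mult; [exact (Gamma_spec s Hc)|].
  apply CV_mult; [apply Un_cv_const | apply Un_cv_INR_ratio; lra].
Qed.

Lemma Gamma_conv_succ s : 0 < s -> Gamma_conv s -> Gamma_conv (s + 1).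
Proof. intros Hs Hc. exists (s * Gamma s). exact (gauss_gamma_seq_succ_cv s Hs Hc). Qed.

Lemma Gamma_succ s : 0 < s -> Gamma_conv s -> Gamma (s + 1) = s * Gamma s.
Proof. intros Hs Hc. exact (Gamma_unique _ _ (gauss_gamma_seq_succ_cv s Hs Hc)). Qed.

Lemma gauss_gamma_seq_1_cv : Un_cv (gauss_gamma_seq 1) 1.
Proof.
  refine (Un_cv_eventually_eq _ _ _ 1 _ (Un_cv_INR_ratio 1 Rlt_0_1)).
  intros n Hn. unfold gauss_gamma_seq.
  rewrite prod_f_R0_succ_INR, Rpower_1 by (apply lt_0_INR; lia).
  change (fact (S n)) with (S n * fact n)%nat.
  rewrite mult_INR, S_INR. pose proof (INR_fact_lt_0 n). pose proof (pos_INR n).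
  field. lra.
Qed.

Lemma Gamma_conv_nat k : Gamma_conv (INR k + 1).
Proof.
  induction k as [|k IH].
  - exists 1. replace (INR 0 + 1) with 1 by (simpl; ring). exact gauss_gamma_seq_1_cv.
  - rewrite S_INR. apply Gamma_conv_succ; [pose proof (pos_INR k); lra | exact IH].
Qed.

Lemma Gamma_nat k : Gamma (INR k + 1) = INR (fact k).
Proof.
  induction k as [|k IH].
  - replace (INR 0 + 1) with 1 by (simpl; ring). exact (Gamma_unique _ _ gauss_gamma_seq_1_cv).
  - assert (Hk : 0 < INR k + 1) by (pose proof (pos_INR k); lra).
    rewrite S_INR, (Gamma_succ _ Hk (Gamma_conv_nat k)), IH.
    change (fact (S k)) with (S k * fact k)%nat. rewrite mult_INR, S_INR. ring.
Qed.

Lemma Rle_of_sqr_le a b : 0 <= b -> a ^ 2 <= b ^ 2 -> a <= b.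
Proof. intros Hb H. apply Rsqr_incr_0_var; [unfold Rsqr; simpl in H; lra | exact Hb]. Qed.

(* Shifted by one: at [N = 0] the factor [Rpower 0 (/2)] is a junk value. *)
Definition gauss_half (n : nat) : R := gauss_gamma_seq (/2) (S n).

Lemma gauss_half_eq n : gauss_half n =
  INR (fact (S n)) * sqrt (INR (S n)) / prod_f_R0 (fun j => /2 + INR j) (S n).
Proof. unfold gauss_half, gauss_gamma_seq. rewrite Rpower_sqrt; [reflexivity | apply lt_0_INR; lia]. Qed.

Lemma prod_half_pos N : 0 < prod_f_R0 (fun j => /2 + INR j) N.
Proof. apply prod_f_R0_pos. intro j. pose proof (pos_INR j). lra. Qed.

Lemma gauss_half_pos n : 0 < gauss_half n.
Proof.
  rewrite gauss_half_eq. pose proof (INR_fact_lt_0 (S n)). pose proof (prod_half_pos (S n)).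
  assert (0 < sqrt (INR (S n))) by (apply sqrt_lt_R0, lt_0_INR; lia).
  apply Rdiv_lt_0_compat; [apply Rmult_lt_0_compat|]; assumption.
Qed.

(* From [m (m + 3/2)^2 <= (m + 1)^3]. *)
Lemma gauss_half_growing : Un_growing gauss_half.
Proof.
  intro n. rewrite !gauss_half_eq.
  change (prod_f_R0 (fun j => /2 + INR j) (S (S n)))
    with (prod_f_R0 (fun j => /2 + INR j) (S n) * (/2 + INR (S (S n)))).
  change (fact (S (S n))) with (S (S n) * fact (S n))%nat. rewrite mult_INR, (S_INR (S n)).
  set (F := INR (fact (S n))). set (Q := prod_f_R0 (fun j => /2 + INR j) (S n)).
  set (m := INR (S n)).
  assert (HF : 0 < F) by apply INR_fact_lt_0.
  assert (HQ : 0 < Q) by apply prod_half_pos.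
  assert (Hm : 1 <= m) by (unfold m; rewrite S_INR; pose proof (pos_INR n); lra).
  assert (Hs : sqrt m * (m + /2 + 1) <= (m + 1) * sqrt (m + 1)).
  { pose proof (sqrt_pos m). pose proof (sqrt_pos (m + 1)).
    pose proof (sqrt_sqrt m ltac:(lra)). pose proof (sqrt_sqrt (m + 1) ltac:(lra)).
    apply Rle_of_sqr_le; [nra|].
    replace ((sqrt m * (m + /2 + 1)) ^ 2) with (sqrt m * sqrt m * (m + /2 + 1) ^ 2) by ring.
    replace (((m + 1) * sqrt (m + 1)) ^ 2) with ((m + 1) ^ 2 * (sqrt (m + 1) * sqrt (m + 1))) by ring.
    nra. }
  replace (/2 + (m + 1)) with (m + /2 + 1) by ring.
  apply (Rmult_le_reg_r (Q * (m + /2 + 1))); [nra|].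
  replace (F * sqrt m / Q * (Q * (m + /2 + 1))) with (F * (sqrt m * (m + /2 + 1))) by (field; lra).
  replace ((m + 1) * F * sqrt (m + 1) / (Q * (m + /2 + 1)) * (Q * (m + /2 + 1)))
    with (F * ((m + 1) * sqrt (m + 1))) by (field; lra).
  apply Rmult_le_compat_l; lra.
Qed.

(* [(m + 1) (m + 2) <= (m + 3/2)^2] makes the ratio nonincreasing; 32/9 is its value at [n = 0]. *)
Lemma gauss_half_sqr_bound n :
  INR (fact (S n)) ^ 2 * (INR (S n) + 1) <= 32 / 9 * prod_f_R0 (fun j => /2 + INR j) (S n) ^ 2.
Proof.
  induction n as [|n IH]; [simpl; lra|].
  change (prod_f_R0 (fun j => /2 + INR j) (S (S n)))
    with (prod_f_R0 (fun j => /2 + INR j) (S n) * (/2 + INR (S (S n)))).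
  change (fact (S (S n))) with (S (S n) * fact (S n))%nat. rewrite mult_INR, (S_INR (S n)).
  set (F := INR (fact (S n))) in *. set (Q := prod_f_R0 (fun j => /2 + INR j) (S n)) in *.
  set (m := INR (S n)) in *.
  assert (Hm : 1 <= m) by (unfold m; rewrite S_INR; pose proof (pos_INR n); lra).
  replace (((m + 1) * F) ^ 2 * (m + 1 + 1)) with (F ^ 2 * (m + 1) * ((m + 1) * (m + 2))) by ring.
  replace (32 / 9 * (Q * (/2 + (m + 1))) ^ 2) with (32 / 9 * Q ^ 2 * (m + /2 + 1) ^ 2) by ring.
  apply Rle_trans with (32 / 9 * Q ^ 2 * ((m + 1) * (m + 2))).
  - apply Rmult_le_compat_r; nra.
  - apply Rmult_le_compat_l; nra.
Qed.

Lemma gauss_half_le_2 n : gauss_half n <= 2.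
Proof.
  pose proof (gauss_half_sqr_bound n) as Hb. rewrite gauss_half_eq.
  set (F := INR (fact (S n))) in *. set (Q := prod_f_R0 (fun j => /2 + INR j) (S n)) in *.
  set (m := INR (S n)) in *.
  assert (HQ : 0 < Q) by apply prod_half_pos.
  assert (Hm : 0 < m) by (apply lt_0_INR; lia).
  apply Rle_of_sqr_le; [lra|].
  replace ((F * sqrt m / Q) ^ 2) with (F ^ 2 * (sqrt m * sqrt m) / Q ^ 2) by (field; lra).
  rewrite sqrt_sqrt by lra. apply (Rmult_le_reg_r (Q ^ 2)); [nra|].
  replace (F ^ 2 * m / Q ^ 2 * Q ^ 2) with (F ^ 2 * m) by (field; lra). nra.
Qed.

Lemma gauss_half_cv : { g | Un_cv gauss_half g }.
Proof. apply growing_cv; [exact gauss_half_growing | exists 2; intros x [n ->]; apply gauss_half_le_2]. Qed.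

Lemma Gamma_conv_half : Gamma_conv (/2).
Proof. destruct gauss_half_cv as [g Hg]. exists g. exact (Un_cv_S _ _ Hg). Qed.

Lemma Gamma_half_pos : 0 < Gamma (/2).
Proof.
  destruct gauss_half_cv as [g Hg].
  rewrite (Gamma_unique _ _ (Un_cv_S _ _ Hg)). apply Rlt_le_trans with (gauss_half 0); [apply gauss_half_pos|].
  exact (growing_ineq _ _ gauss_half_growing Hg 0).
Qed.

Lemma Gamma_conv_half_int k : Gamma_conv (INR k + /2).
Proof.
  induction k as [|k IH].
  - replace (INR 0 + /2) with (/2) by (simpl; ring). exact Gamma_conv_half.
  - replace (INR (S k) + /2) with (INR k + /2 + 1) by (rewrite S_INR; ring).
    apply Gamma_conv_succ; [pose proof (pos_INR k); lra | exact IH].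
Qed.

Lemma Gamma_half_int k :
  INR (fact k) * Gamma (INR k + /2) * 4 ^ k = INR (fact (2 * k)) * Gamma (/2).
Proof.
  induction k as [|k IH].
  - simpl. replace (0 + /2) with (/2) by ring. ring.
  - replace (INR (S k) + /2) with (INR k + /2 + 1) by (rewrite S_INR; ring).
    assert (Hk : 0 < INR k + /2) by (pose proof (pos_INR k); lra).
    rewrite (Gamma_succ _ Hk (Gamma_conv_half_int k)).
    replace (2 * S k)%nat with (S (S (2 * k))) by lia.
    change (fact (S (S (2 * k)))) with (S (S (2 * k)) * (S (2 * k) * fact (2 * k)))%nat.
    change (fact (S k)) with (S k * fact k)%nat.
    rewrite !mult_INR, !S_INR, mult_INR.
    transitivity ((INR 2 * INR k + 1 + 1) * (INR 2 * INR k + 1) * (INR (fact (2 * k)) * Gamma (/2)));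
      [rewrite <- IH; simpl (INR 2); simpl pow; field | ring].
Qed.

Lemma besselI_reg_term_0 y k :
  besselI_reg_term 0 y k = Cscale (/ (INR (fact k) ^ 2)) (Cpow y k).
Proof. unfold besselI_reg_term. rewrite Rplus_0_r, Gamma_nat. simpl pow. rewrite Rmult_1_r. reflexivity. Qed.

Lemma besselI_reg_term_1 y k :
  besselI_reg_term 1 y k = Cscale (/ (INR (fact k) * INR (fact (k + 1)))) (Cpow y k).
Proof.
  unfold besselI_reg_term. rewrite Nat.add_1_r, <- (Gamma_nat (S k)), S_INR. reflexivity.
Qed.

Lemma besselI_reg_term_neg_half y k :
  Cscale (Gamma (/2)) (besselI_reg_term (- /2) y k) =
  Cscale (4 ^ k / INR (fact (2 * k))) (Cpow y k).
Proof.
  unfold besselI_reg_term. rewrite Cscale_Cscale.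
  replace (INR k + - /2 + 1) with (INR k + /2) by field.
  f_equal. pose proof (Gamma_half_int k) as E. pose proof Gamma_half_pos.
  pose proof (INR_fact_lt_0 k). pose proof (INR_fact_lt_0 (2 * k)).
  assert (0 < 4 ^ k) by (apply pow_lt; lra).
  assert (Gamma (INR k + /2) <> 0) by (intro Z; rewrite Z in E; nra).
  replace (Gamma (/2)) with (INR (fact k) * Gamma (INR k + /2) * 4 ^ k / INR (fact (2 * k)))
    by (rewrite E; field; lra).
  field. lra.
Qed.

Ltac unfold_C := cbv [cdot Csum1 rho pc varrho Cmul Cadd Csub Copp Cconj Cscale C0 C1 Ci half fst snd].

Lemma cdot_rho_NM22 z w :
  cdot 3 (rho NM22 z) (rho NM22 w) =
  Cscale (/2) (Cmul (Cadd (pc z w 1 1) (pc z w 2 2)) (Cadd (pc z w 1 1) (pc z w 2 2))).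
Proof. unfold_C. f_equal; field. Qed.

Lemma cdot_rho_NM34 z w :
  cdot 4 (rho NM34 z) (rho NM34 w) =
  Cscale 2 (Cmul (Cadd (pc z w 1 1) (pc z w 2 2)) (Cadd (pc z w 3 3) (pc z w 4 4))).
Proof. unfold_C. f_equal; ring. Qed.

Lemma cdot_rho_NM58 z w : cdot 6 (rho NM58 z) (rho NM58 w) = Cscale 2 (varrho z w).
Proof. unfold_C. f_equal; ring. Qed.

Lemma Q_term_NM22 hbar z w k : 0 < hbar ->
  Q_term NM22 hbar z w k =
  Cscale (Gamma (/2))
    (besselI_reg_term (- /2) (Cscale (/ (2 * hbar ^ 2)) (cdot 3 (rho NM22 z) (rho NM22 w))) k).
Proof.
  intro Hh. rewrite besselI_reg_term_neg_half, cdot_rho_NM22. unfold Q_term.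
  rewrite Cpow_double, Cscale_Cscale, Cpow_Cscale, Cscale_Cscale. f_equal.
  pose proof (INR_fact_lt_0 (2 * k)).
  replace (/ (2 * hbar ^ 2) * / 2) with (/ (4 * hbar ^ 2)) by (field; nra).
  rewrite pow_inv, Rpow_mult_distr, pow_mult.
  field. split; [|split]; try lra; apply pow_nonzero; nra.
Qed.

Lemma Q_term_NM34 hbar z w k : 0 < hbar ->
  Q_term NM34 hbar z w k =
  besselI_reg_term 0 (Cscale (/ (2 * hbar ^ 2)) (cdot 4 (rho NM34 z) (rho NM34 w))) k.
Proof.
  intro Hh. rewrite besselI_reg_term_0, cdot_rho_NM34. unfold Q_term.
  rewrite Cscale_Cscale, Cpow_Cscale, Cpow_Cmul, Cscale_Cscale. f_equal.
  pose proof (INR_fact_lt_0 k).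
  replace (/ (2 * hbar ^ 2) * 2) with (/ hbar ^ 2) by (field; nra).
  rewrite pow_inv, pow_mult. field. split; [apply pow_nonzero; nra | lra].
Qed.

Lemma Q_term_NM58 hbar z w k : 0 < hbar ->
  Q_term NM58 hbar z w k =
  besselI_reg_term 1 (Cscale (/ (2 * hbar ^ 2)) (cdot 6 (rho NM58 z) (rho NM58 w))) k.
Proof.
  intro Hh. rewrite besselI_reg_term_1, cdot_rho_NM58. unfold Q_term.
  rewrite Cscale_Cscale, Cpow_Cscale, Cscale_Cscale. f_equal.
  pose proof (INR_fact_lt_0 k). pose proof (INR_fact_lt_0 (k + 1)).
  replace (/ (2 * hbar ^ 2) * 2) with (/ hbar ^ 2) by (field; nra).
  rewrite pow_inv, pow_mult. field. split; [apply pow_nonzero; nra | lra].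
Qed.

Lemma Gamma_order_pos c : 0 < Gamma ((INR (n_of c) - 1) / 2).
Proof.
  destruct c; simpl n_of.
  - replace ((INR 2 - 1) / 2) with (/2) by (simpl; field). exact Gamma_half_pos.
  - replace ((INR 3 - 1) / 2) with (INR 0 + 1) by (simpl; field). rewrite Gamma_nat. simpl; lra.
  - replace ((INR 5 - 1) / 2) with (INR 1 + 1) by (simpl; field). rewrite Gamma_nat. simpl; lra.
Qed.

Lemma Q_term_besselI c hbar z w k : 0 < hbar ->
  Q_term c hbar z w k =
  Cscale (Gamma ((INR (n_of c) - 1) / 2))
    (besselI_reg_term ((INR (n_of c) - 3) / 2)
       (Cscale (/ (2 * hbar ^ 2)) (cdot (n_of c + 1) (rho c z) (rho c w))) k).
Proof.
  intro Hh. destruct c; simpl n_of; simpl (_ + 1)%nat.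
  - replace ((INR 2 - 1) / 2) with (/2) by (simpl; field).
    replace ((INR 2 - 3) / 2) with (- /2) by (simpl; field).
    exact (Q_term_NM22 hbar z w k Hh).
  - replace ((INR 3 - 1) / 2) with (INR 0 + 1) by (simpl; field).
    replace ((INR 3 - 3) / 2) with 0 by (simpl; field).
    rewrite Gamma_nat, Cscale_1. exact (Q_term_NM34 hbar z w k Hh).
  - replace ((INR 5 - 1) / 2) with (INR 1 + 1) by (simpl; field).
    replace ((INR 5 - 3) / 2) with 1 by (simpl; field).
    rewrite Gamma_nat, Cscale_1. exact (Q_term_NM58 hbar z w k Hh).
Qed.

Lemma Cnorm1_Cscale_fact_le D A h k u : 0 < h -> INR (fact k) <= D -> Cnorm1 u <= A ^ k ->
  Cnorm1 (Cscale (/ (D * h ^ (2 * k))) u) <= (A / h ^ 2) ^ k / INR (fact k).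
Proof.
  intros Hh HD Hu. pose proof (INR_fact_lt_0 k).
  assert (Hhk : 0 < (h ^ 2) ^ k) by (apply pow_lt; nra).
  rewrite Cnorm1_Cscale, pow_mult, Rabs_right by (apply Rle_ge, Rlt_le, Rinv_0_lt_compat; nra).
  unfold Rdiv. rewrite Rpow_mult_distr, pow_inv.
  apply Rle_trans with (/ (INR (fact k) * (h ^ 2) ^ k) * A ^ k).
  - apply Rmult_le_compat; [apply Rlt_le, Rinv_0_lt_compat; nra | exact (Cnorm1_ge0 u)
      | apply Rinv_le_contravar; nra | exact Hu].
  - right. field. lra.
Qed.

Lemma Q_term_exp_bound c hbar z w : 0 < hbar ->
  exists M, forall k, Cnorm1 (Q_term c hbar z w k) <= M ^ k / INR (fact k).
Proof.
  intro Hh. set (p := Cadd (pc z w 1 1) (pc z w 2 2)). set (q := Cadd (pc z w 3 3) (pc z w 4 4)).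
  destruct c; [exists (Cnorm1 p ^ 2 / hbar ^ 2) | exists (Cnorm1 p * Cnorm1 q / hbar ^ 2)
    | exists (Cnorm1 (varrho z w) / hbar ^ 2)]; intro k; apply Cnorm1_Cscale_fact_le; auto.
  - apply le_INR, fact_le. lia.
  - rewrite <- pow_mult. apply Cnorm1_Cpow.
  - assert (1 <= INR (fact k)) by apply (le_INR 1), lt_O_fact. nra.
  - rewrite Rpow_mult_distr. eapply Rle_trans; [apply Cnorm1_Cmul|].
    apply Rmult_le_compat; try apply Cnorm1_ge0; apply Cnorm1_Cpow.
  - assert (1 <= INR (fact (k + 1))) by apply (le_INR 1), lt_O_fact.
    pose proof (INR_fact_lt_0 k). nra.
  - apply Cnorm1_Cpow.
Qed.

Theorem proposition2p1 :
  forall (c : nm_case) (hbar : R) (z w : Cvec),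
    0 < hbar ->
    Cvec_nonzero (m_of c) z -> Cvec_nonzero (m_of c) w ->
    let nu := (INR (n_of c) - 3) / 2 in
    let x := cdot (n_of c + 1) (rho c z) (rho c w) in
    let y := Cscale (/ (2 * hbar ^ 2)) x in
    exists q L : Defs.C,
      Q_value c hbar z w q /\
      Cseries (besselI_reg_term nu y) L /\
      q = Cscale (Gamma ((INR (n_of c) - 1) / 2)) L.
Proof.
  (* The identity holds for [z = 0] or [w = 0] as well. *)
  intros c hbar z w Hh _ _. cbv zeta.
  pose proof (Rgt_not_eq _ _ (Gamma_order_pos c)) as HG.
  set (G := Gamma ((INR (n_of c) - 1) / 2)) in *.
  destruct (Q_term_exp_bound c hbar z w Hh) as [M HM].
  destruct (Cseries_exp_bound _ _ HM) as [q Hq].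
  exists q, (Cscale (/ G) q). split; [exact Hq | split].
  - apply Cseries_scale_eq with (Q_term c hbar z w); [|exact Hq].
    intro k. rewrite (Q_term_besselI c hbar z w k Hh), Cscale_Cscale, Rinv_l, Cscale_1 by exact HG.
    reflexivity.
  - rewrite Cscale_Cscale, Rinv_r, Cscale_1 by exact HG. reflexivity.
Qed.
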